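(* Let $a\geq5$. The function $F\colon[0,+\infty)\times[0,+\infty)\to[0,+\infty)\times[0,+\infty)$ defined by $$F(z,w)=\left(\frac{z+w}{1+z+w},\ \frac{z\bigl(a(1+z)+(a+3)w\bigr)}{(1+z+w)^2}\right)$$ is injective. *)

From mathcomp Require Import all_boot all_order all_algebra.
From mathcomp Require Import reals.
Set Implicit Arguments. Unset Strict Implicit. Unset Printing Implicit Defensive.
Import Order.TTheory GRing.Theory Num.Theory.
Local Open Scope ring_scope.

Definition Fmap (R : realType) (a : R) (p : R * R) : R * R :=
  let z := p.1 in let w := p.2 in
  ((z + w) / (1 + z + w),
   z * (a * (1 + z) + (a + 3) * w) / (1 + z + w) ^+ 2).

From mathcomp Require Import all_boot all_order all_algebra.
From mathcomp Require Import reals.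
From mathcomp Require Import ring lra.
Import Order.TTheory GRing.Theory Num.Theory.
Local Open Scope ring_scope.

(* The first coordinate s/(1+s) of F determines s = z + w.  On the segment
   z + w = s the second coordinate is (1+s)^-2 times z (a + (a+3) s - 3 z),
   and for z1, z2 in [0, s] the difference quotient a + (a+3) s - 3 (z1 + z2)
   of this quadratic is at least a + (a-3) s > 0 once a >= 3.  Hence z, and
   then w, is determined. *)

Lemma div_1D_inj (F : fieldType) (x y : F) :
  1 + x != 0 -> 1 + y != 0 -> x / (1 + x) = y / (1 + y) -> x = y.
Proof.
move=> nz_x nz_y /eqP; rewrite eqr_div // => /eqP E.
have -> : x = x * (1 + y) - x * y by ring.
by rewrite E; ring.
Qed.

Lemma Fmap_numer_inj (R : realFieldType) (a z1 w1 z2 w2 : R) : 3 <= a ->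
  0 <= z1 -> 0 <= w1 -> 0 <= z2 -> 0 <= w2 -> z1 + w1 = z2 + w2 ->
  z1 * (a * (1 + z1) + (a + 3) * w1) = z2 * (a * (1 + z2) + (a + 3) * w2) ->
  z1 = z2.
Proof.
move=> ha hz1 hw1 hz2 hw2 hs E.
have w2E : w2 = z1 + w1 - z2 by rewrite hs; ring.
have factorE : z1 * (a * (1 + z1) + (a + 3) * w1)
                 - z2 * (a * (1 + z2) + (a + 3) * w2)
               = (z1 - z2) * (a + (a + 3) * (z1 + w1) - 3 * (z1 + z2)).
  by rewrite w2E; ring.
have quot_gt0 : 0 < a + (a + 3) * (z1 + w1) - 3 * (z1 + z2) by nra.
move/eqP: E; rewrite -subr_eq0 factorE mulf_eq0 (gt_eqF quot_gt0) orbF.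
by rewrite subr_eq0 => /eqP.
Qed.

Theorem lemma4p5 (R : realType) (a : R) (ha : 5 <= a) (z1 w1 z2 w2 : R) :
  0 <= z1 -> 0 <= w1 -> 0 <= z2 -> 0 <= w2 ->
  Fmap a (z1, w1) = Fmap a (z2, w2) -> (z1, w1) = (z2, w2).
Proof.
move=> hz1 hw1 hz2 hw2; rewrite /Fmap /= -!(addrA 1) => -[E1 E2].
have nz1 : 1 + (z1 + w1) != 0 by rewrite gt_eqF //; lra.
have nz2 : 1 + (z2 + w2) != 0 by rewrite gt_eqF //; lra.
have hs : z1 + w1 = z2 + w2 by exact: div_1D_inj E1.
rewrite -hs in E2; have numerE := mulIf (invr_neq0 (expf_neq0 2 nz1)) E2.
have hz : z1 = z2.
  by apply: (@Fmap_numer_inj R a z1 w1 z2 w2 _ hz1 hw1 hz2 hw2 hs numerE); lra.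
by rewrite hz; congr pair; lra.
Qed.
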